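(* If the Noperthedron $\mathcal{N}$ has Rupert's property, then there exist $\theta_1,\theta_2\in[0,2\pi/15]$, $\varphi_1\in[0,\pi]$, $\varphi_2\in[0,\pi/2]$ and $\alpha\in[-\pi/2,\pi/2]$ such that $R(\alpha)M(\theta_1,\varphi_1)\mathcal{N}\subset\operatorname{int}\operatorname{conv}(M(\theta_2,\varphi_2)\mathcal{N})$.
   Context: $R(\alpha)=\begin{pmatrix}\cos\alpha&-\sin\alpha\\ \sin\alpha&\cos\alpha\end{pmatrix}$, $M(\theta,\varphi)=\begin{pmatrix}-\sin\theta&\cos\theta&0\\ -\cos\theta\cos\varphi&-\sin\theta\cos\varphi&\sin\varphi\end{pmatrix}$, acting elementwise on point sets. A pointsymmetric polyhedron $\mathcal{P}$ has Rupert's property if there exist $\theta_1,\theta_2\in[0,2\pi)$, $\varphi_1,\varphi_2\in[0,\pi]$, $\alpha\in[-\pi,\pi)$ with $R(\alpha)M(\theta_1,\varphi_1)\mathcal{P}\subset\operatorname{int}\operatorname{conv}(M(\theta_2,\varphi_2)\mathcal{P})$. Let $R_z(\beta)=\begin{pmatrix}\cos\beta&-\sin\beta&0\\ \sin\beta&\cos\beta&0\\0&0&1\end{pmatrix}$, $\mathcal{C}_{30}=\{(-1)^\ell R_z(2\pi k/15): k=0,\dots,14,\ \ell=0,1\}$, $C_1=\frac{1}{259375205}(152024884,0,210152163)^t$, $C_2=10^{-10}(6632738028,6106948881,3980949609)^t$, $C_3=10^{-10}(8193990033,5298215096,1230614493)^t$; the Noperthedron is $\mathcal{N}=\mathcal{C}_{30}C_1\cup\mathcal{C}_{30}C_2\cup\mathcal{C}_{30}C_3$.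 *)

From Stdlib Require Import Reals List.
Open Scope R_scope.

Definition pt2 := (R * R)%type.
Definition pt3 := (R * R * R)%type.

Definition rot2 (a : R) (q : pt2) : pt2 :=
  let '(x, y) := q in (cos a * x - sin a * y, sin a * x + cos a * y).

Definition projM (th ph : R) (p : pt3) : pt2 :=
  let '(x, y, z) := p in
  (- sin th * x + cos th * y,
   - cos th * cos ph * x - sin th * cos ph * y + sin ph * z).

Definition rotz (b : R) (p : pt3) : pt3 :=
  let '(x, y, z) := p in (cos b * x - sin b * y, sin b * x + cos b * y, z).

Definition scale3 (c : R) (p : pt3) : pt3 :=
  let '(x, y, z) := p in (c * x, c * y, c * z).

Definition in_C30_orbit (c p : pt3) : Prop :=
  exists (k l : nat), (k <= 14)%nat /\ (l <= 1)%nat /\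
    p = scale3 ((-1) ^ l) (rotz (2 * PI * INR k / 15) c).

Definition C1 : pt3 :=
  (152024884 / 259375205, 0, 210152163 / 259375205).
Definition C2 : pt3 :=
  (6632738028 / 10000000000, 6106948881 / 10000000000, 3980949609 / 10000000000).
Definition C3 : pt3 :=
  (8193990033 / 10000000000, 5298215096 / 10000000000, 1230614493 / 10000000000).

(* the Noperthedron, as its (finite) set of vertices *)
Definition Noperthedron (p : pt3) : Prop :=
  in_C30_orbit C1 p \/ in_C30_orbit C2 p \/ in_C30_orbit C3 p.

Fixpoint wsum (l : list (R * pt2)) : pt2 :=
  match l with
  | nil => (0, 0)
  | (w, (x, y)) :: t => let '(a, b) := wsum t in (w * x + a, w * y + b)
  end.

Fixpoint wtotal (l : list (R * pt2)) : R :=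
  match l with
  | nil => 0
  | (w, _) :: t => w + wtotal t
  end.

Definition conv (S : pt2 -> Prop) (x : pt2) : Prop :=
  exists l : list (R * pt2),
    Forall (fun wp => 0 <= fst wp /\ S (snd wp)) l /\
    wtotal l = 1 /\ wsum l = x.

Definition dist2 (p q : pt2) : R :=
  sqrt ((fst p - fst q) ^ 2 + (snd p - snd q) ^ 2).

Definition interior (A : pt2 -> Prop) (x : pt2) : Prop :=
  exists eps, 0 < eps /\ forall y, dist2 x y < eps -> A y.

Definition imgM (th ph : R) (P : pt3 -> Prop) (q : pt2) : Prop :=
  exists p, P p /\ q = projM th ph p.

Definition rupert_config (P : pt3 -> Prop) (th1 ph1 th2 ph2 a : R) : Prop :=
  forall p, P p -> interior (conv (imgM th2 ph2 P)) (rot2 a (projM th1 ph1 p)).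

Definition rupert (P : pt3 -> Prop) : Prop :=
  exists th1 th2 ph1 ph2 a,
    0 <= th1 < 2 * PI /\ 0 <= th2 < 2 * PI /\
    0 <= ph1 <= PI /\ 0 <= ph2 <= PI /\ - PI <= a < PI /\
    rupert_config P th1 ph1 th2 ph2 a.

(* The C30 symmetries of the Noperthedron act on the parameters of a Rupert
   configuration.  Since projM th ph (R_z(b) p) = projM (th - b) ph p, the
   rotations R_z(2 pi k / 15) shift th1 and th2 by multiples of 2 pi / 15; the
   point reflection -1 turns M P into -(M P), which R(alpha + pi) undoes; and
   (th, ph, alpha) |-> (th + pi, pi - ph, -alpha) mirrors the whole picture in
   the second coordinate axis, which preserves the interior of convex hulls.
   These moves bring ph2 into [0, pi/2], then alpha into [-pi/2, pi/2], then
   th1 and th2 into [0, 2 pi / 15]. *)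

From Pilot Require Import Defs.
From Stdlib Require Import Reals List Lra Lia.
Open Scope R_scope.

Definition reflect2 (q : pt2) : pt2 := (- fst q, snd q).
Definition opp2 (q : pt2) : pt2 := (- fst q, - snd q).

Definition invariant (f : pt3 -> pt3) (P : pt3 -> Prop) : Prop :=
  forall p, P p -> P (f p).

Lemma reflect2K q : reflect2 (reflect2 q) = q.
Proof. destruct q; unfold reflect2; simpl; f_equal; ring. Qed.

Lemma projM_rotz th ph b p : projM th ph (rotz b p) = projM (th - b) ph p.
Proof. destruct p as [[x y] z]; simpl; rewrite cos_minus, sin_minus; f_equal; ring. Qed.

Lemma projM_opp th ph p : projM th ph (scale3 (-1) p) = opp2 (projM th ph p).
Proof. destruct p as [[x y] z]; unfold opp2; simpl; f_equal; ring. Qed.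

Lemma projM_antipodal th ph p : projM (th + PI) (PI - ph) p = reflect2 (projM th ph p).
Proof.
  destruct p as [[x y] z]; unfold reflect2; simpl.
  rewrite neg_cos, neg_sin, sin_PI_x, cos_minus, cos_PI, sin_PI; f_equal; ring.
Qed.

Lemma rot2_add_PI a q : rot2 (a + PI) q = rot2 a (opp2 q).
Proof. destruct q; unfold opp2; simpl; rewrite neg_cos, neg_sin; f_equal; ring. Qed.

Lemma rot2_sub_PI a q : rot2 (a - PI) q = rot2 a (opp2 q).
Proof.
  destruct q; unfold opp2; simpl; rewrite cos_minus, sin_minus, cos_PI, sin_PI; f_equal; ring.
Qed.

Lemma rot2_opp_reflect2 a q : rot2 (- a) (reflect2 q) = reflect2 (rot2 a q).
Proof. destruct q; unfold reflect2; simpl; rewrite cos_neg, sin_neg; f_equal; ring. Qed.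

Lemma rotz_scale3 b s p : rotz b (scale3 s p) = scale3 s (rotz b p).
Proof.
  destruct p as [[x y] z]; simpl.
  apply (f_equal2 pair); [apply (f_equal2 pair)|]; ring.
Qed.

Lemma rotz_rotz b1 b2 p : rotz b1 (rotz b2 p) = rotz (b1 + b2) p.
Proof.
  destruct p as [[x y] z]; simpl; rewrite cos_plus, sin_plus.
  apply (f_equal2 pair); [apply (f_equal2 pair)|]; ring.
Qed.

Lemma rotz_period b k p : rotz (b + 2 * INR k * PI) p = rotz b p.
Proof. destruct p as [[x y] z]; simpl; rewrite cos_period, sin_period; reflexivity. Qed.

Lemma scale3_scale3 s t p : scale3 s (scale3 t p) = scale3 (s * t) p.
Proof.
  destruct p as [[x y] z]; simpl.
  apply (f_equal2 pair); [apply (f_equal2 pair)|]; ring.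
Qed.

Lemma in_C30_orbit_rotz c m : invariant (rotz (2 * PI * INR m / 15)) (in_C30_orbit c).
Proof.
  intros p (k & l & Hk & Hl & ->).
  rewrite rotz_scale3, rotz_rotz.
  exists ((m + k) mod 15)%nat, l; split; [|split; [exact Hl|]].
  - pose proof (Nat.mod_upper_bound (m + k) 15); lia.
  - assert (Hdiv : INR m + INR k = 15 * INR ((m + k) / 15) + INR ((m + k) mod 15)).
    { rewrite <- plus_INR, (Nat.div_mod_eq (m + k) 15) at 1.
      rewrite plus_INR, mult_INR; simpl (INR 15); ring. }
    rewrite <- (rotz_period (2 * PI * INR ((m + k) mod 15) / 15) ((m + k) / 15)).
    do 2 f_equal.
    transitivity (2 * PI / 15 * (INR m + INR k)); [field|rewrite Hdiv; field].
Qed.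

Lemma in_C30_orbit_opp c : invariant (scale3 (-1)) (in_C30_orbit c).
Proof.
  intros p (k & l & Hk & Hl & ->).
  rewrite scale3_scale3.
  exists k, (1 - l)%nat; split; [exact Hk|split; [lia|]].
  destruct l as [|[|l]]; [| |lia]; simpl; f_equal; ring.
Qed.

Lemma invariant_Noperthedron f :
  (forall c, invariant f (in_C30_orbit c)) -> invariant f Noperthedron.
Proof. intros Hf p [H|[H|H]]; [left|right; left|right; right]; apply Hf, H. Qed.

Lemma Noperthedron_rotz_step : invariant (rotz (2 * PI / 15)) Noperthedron.
Proof.
  intros p Hp.
  replace (2 * PI / 15) with (2 * PI * INR 1 / 15) by (simpl; field).
  exact (invariant_Noperthedron _ (fun c => in_C30_orbit_rotz c 1) p Hp).
Qed.

Lemma Noperthedron_rotz_step_inv : invariant (rotz (- (2 * PI / 15))) Noperthedron.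
Proof.
  intros p Hp.
  rewrite <- (rotz_period _ 1).
  replace (- (2 * PI / 15) + 2 * INR 1 * PI) with (2 * PI * INR 14 / 15) by (simpl; field).
  exact (invariant_Noperthedron _ (fun c => in_C30_orbit_rotz c 14) p Hp).
Qed.

Lemma Noperthedron_opp : invariant (scale3 (-1)) Noperthedron.
Proof. exact (invariant_Noperthedron _ in_C30_orbit_opp). Qed.

Lemma conv_mono (S S' : pt2 -> Prop) :
  (forall y, S y -> S' y) -> forall x, conv S x -> conv S' x.
Proof.
  intros HS x (l & Hl & Htot & Hsum); exists l; split; [|auto].
  eapply Forall_impl; [|exact Hl]; intros wp [Hw Hp]; auto.
Qed.

Lemma interior_mono (A A' : pt2 -> Prop) :
  (forall y, A y -> A' y) -> forall x, Defs.interior A x -> Defs.interior A' x.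
Proof. intros HA x (e & He & H); exists e; auto. Qed.

Lemma wtotal_map_snd (g : pt2 -> pt2) l :
  wtotal (map (fun wp => (fst wp, g (snd wp))) l) = wtotal l.
Proof. induction l as [|[w q] l IH]; simpl; [|rewrite IH]; reflexivity. Qed.

Lemma wsum_map_reflect2 l :
  wsum (map (fun wp => (fst wp, reflect2 (snd wp))) l) = reflect2 (wsum l).
Proof.
  unfold reflect2; induction l as [|[w [u v]] l IH]; simpl; [f_equal; ring|].
  rewrite IH; destruct (wsum l); simpl; f_equal; ring.
Qed.

Lemma conv_reflect2 S x : conv S x -> conv (fun y => S (reflect2 y)) (reflect2 x).
Proof.
  intros (l & Hl & Htot & Hsum).
  exists (map (fun wp => (fst wp, reflect2 (snd wp))) l).
  rewrite wtotal_map_snd, wsum_map_reflect2, Hsum; split; [|auto].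
  apply Forall_map; eapply Forall_impl; [|exact Hl].
  intros wp [Hw Hp]; simpl; rewrite reflect2K; auto.
Qed.

Lemma dist2_reflect2 x y : dist2 (reflect2 x) y = dist2 x (reflect2 y).
Proof. destruct x, y; unfold dist2, reflect2; simpl; f_equal; ring. Qed.

Lemma interior_conv_reflect2 S x :
  Defs.interior (conv S) x ->
  Defs.interior (conv (fun y => S (reflect2 y))) (reflect2 x).
Proof.
  intros (e & He & H); exists e; split; [exact He|].
  intros y Hy; rewrite dist2_reflect2 in Hy.
  rewrite <- (reflect2K y); apply conv_reflect2, H, Hy.
Qed.

Section RupertMoves.

Variable P : pt3 -> Prop.

Lemma rupert_config_antipodal th1 ph1 th2 ph2 a :
  rupert_config P th1 ph1 th2 ph2 a ->
  rupert_config P (th1 + PI) (PI - ph1) (th2 + PI) (PI - ph2) (- a).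
Proof.
  intros Hc p Hp.
  rewrite projM_antipodal, rot2_opp_reflect2.
  apply (interior_mono (conv (fun y => imgM th2 ph2 P (reflect2 y)))).
  - apply conv_mono; intros y (p' & Hp' & Hy).
    exists p'; split; [exact Hp'|].
    rewrite projM_antipodal, <- Hy, reflect2K; reflexivity.
  - apply interior_conv_reflect2, Hc, Hp.
Qed.

Lemma rupert_config_opp th1 ph1 th2 ph2 a a' :
  invariant (scale3 (-1)) P -> (forall q, rot2 a' q = rot2 a (opp2 q)) ->
  rupert_config P th1 ph1 th2 ph2 a -> rupert_config P th1 ph1 th2 ph2 a'.
Proof. intros Hopp Ha Hc p Hp; rewrite Ha, <- projM_opp; apply Hc, Hopp, Hp. Qed.

Lemma rupert_config_sub_th1 b th1 ph1 th2 ph2 a :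
  invariant (rotz b) P ->
  rupert_config P th1 ph1 th2 ph2 a -> rupert_config P (th1 - b) ph1 th2 ph2 a.
Proof. intros Hb Hc p Hp; rewrite <- projM_rotz; apply Hc, Hb, Hp. Qed.

Lemma rupert_config_add_th2 b th1 ph1 th2 ph2 a :
  invariant (rotz b) P ->
  rupert_config P th1 ph1 th2 ph2 a -> rupert_config P th1 ph1 (th2 + b) ph2 a.
Proof.
  intros Hb Hc p Hp; eapply interior_mono; [|apply Hc, Hp].
  apply conv_mono; intros y (p' & Hp' & ->).
  exists (rotz b p'); split; [apply Hb, Hp'|].
  rewrite projM_rotz; f_equal; ring.
Qed.

End RupertMoves.

Lemma exists_shift_into_period (Q : R -> Prop) d :
  0 < d -> (forall x, Q x -> Q (x + d)) -> (forall x, Q x -> Q (x - d)) ->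
  forall x, Q x -> exists y, 0 <= y <= d /\ Q y.
Proof.
  intros Hd Hadd Hsub x Hx.
  assert (Hshift : forall n : Z, Q (x + IZR n * d)).
  { apply Z.peano_ind.
    - replace (x + 0 * d) with x by ring; exact Hx.
    - intros n Hn; rewrite succ_IZR.
      replace (x + (IZR n + 1) * d) with (x + IZR n * d + d) by ring; auto.
    - intros n Hn; unfold Z.pred; rewrite plus_IZR.
      replace (x + (IZR n + -1) * d) with (x + IZR n * d - d) by ring; auto. }
  exists (x + IZR (- Int_part (x / d)) * d); split; [|apply Hshift].
  rewrite opp_IZR.
  destruct (base_Int_part (x / d)) as [Hlow Hhigh].
  assert (Hx_eq : x = d * (x / d)) by (field; lra).
  split; nra.
Qed.

Lemma rupert_config_ph2_le_PI2 P th1 ph1 th2 ph2 a :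
  0 <= ph1 <= PI -> 0 <= ph2 <= PI -> - PI <= a <= PI ->
  rupert_config P th1 ph1 th2 ph2 a ->
  exists th1' th2' ph1' ph2' a',
    0 <= ph1' <= PI /\ 0 <= ph2' <= PI / 2 /\ - PI <= a' <= PI /\
    rupert_config P th1' ph1' th2' ph2' a'.
Proof.
  intros Hph1 Hph2 Ha Hc.
  destruct (Rle_dec ph2 (PI / 2)).
  - exists th1, th2, ph1, ph2, a; repeat split; auto; lra.
  - exists (th1 + PI), (th2 + PI), (PI - ph1), (PI - ph2), (- a).
    repeat split; try lra; apply rupert_config_antipodal, Hc.
Qed.

Lemma rupert_config_alpha_le_PI2 P th1 ph1 th2 ph2 a :
  invariant (scale3 (-1)) P -> - PI <= a <= PI ->
  rupert_config P th1 ph1 th2 ph2 a ->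
  exists a', - (PI / 2) <= a' <= PI / 2 /\ rupert_config P th1 ph1 th2 ph2 a'.
Proof.
  intros Hopp Ha Hc.
  destruct (Rle_dec a (PI / 2)); [destruct (Rle_dec (- (PI / 2)) a)|].
  - exists a; split; [lra|exact Hc].
  - exists (a + PI); split; [lra|].
    apply (rupert_config_opp _ _ _ _ _ a); auto using rot2_add_PI.
  - exists (a - PI); split; [lra|].
    apply (rupert_config_opp _ _ _ _ _ a); auto using rot2_sub_PI.
Qed.

Lemma rupert_config_th1_period P d th1 ph1 th2 ph2 a :
  0 < d -> invariant (rotz d) P -> invariant (rotz (- d)) P ->
  rupert_config P th1 ph1 th2 ph2 a ->
  exists th1', 0 <= th1' <= d /\ rupert_config P th1' ph1 th2 ph2 a.
Proof.
  intros Hd Hrot Hrot_inv.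
  apply (exists_shift_into_period (fun x => rupert_config P x ph1 th2 ph2 a) d Hd).
  - intros x Hx; replace (x + d) with (x - - d) by ring.
    apply rupert_config_sub_th1; assumption.
  - intros x; apply rupert_config_sub_th1, Hrot.
Qed.

Lemma rupert_config_th2_period P d th1 ph1 th2 ph2 a :
  0 < d -> invariant (rotz d) P -> invariant (rotz (- d)) P ->
  rupert_config P th1 ph1 th2 ph2 a ->
  exists th2', 0 <= th2' <= d /\ rupert_config P th1 ph1 th2' ph2 a.
Proof.
  intros Hd Hrot Hrot_inv.
  apply (exists_shift_into_period (fun x => rupert_config P th1 ph1 x ph2 a) d Hd).
  - intros x; apply rupert_config_add_th2, Hrot.
  - intros x Hx; replace (x - d) with (x + - d) by ring.
    apply rupert_config_add_th2; assumption.
Qed.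

Theorem corollary2p4 :
  rupert Noperthedron ->
  exists th1 th2 ph1 ph2 a,
    0 <= th1 <= 2 * PI / 15 /\ 0 <= th2 <= 2 * PI / 15 /\
    0 <= ph1 <= PI /\ 0 <= ph2 <= PI / 2 /\ - (PI / 2) <= a <= PI / 2 /\
    rupert_config Noperthedron th1 ph1 th2 ph2 a.
Proof.
  intros (th1 & th2 & ph1 & ph2 & a & _ & _ & Hph1 & Hph2 & Ha & Hc).
  assert (Hd : 0 < 2 * PI / 15) by (pose proof PI_RGT_0; lra).
  assert (Ha_le : - PI <= a <= PI) by lra.
  destruct (rupert_config_ph2_le_PI2 _ _ _ _ _ _ Hph1 Hph2 Ha_le Hc)
    as (th1' & th2' & ph1' & ph2' & a' & Hph1' & Hph2' & Ha' & Hc').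
  destruct (rupert_config_alpha_le_PI2 _ _ _ _ _ _ Noperthedron_opp Ha' Hc')
    as (a'' & Ha'' & Hc'').
  destruct (rupert_config_th1_period _ _ _ _ _ _ _ Hd Noperthedron_rotz_step
              Noperthedron_rotz_step_inv Hc'') as (th1'' & Hth1'' & Hc1).
  destruct (rupert_config_th2_period _ _ _ _ _ _ _ Hd Noperthedron_rotz_step
              Noperthedron_rotz_step_inv Hc1) as (th2'' & Hth2'' & Hc2).
  exists th1'', th2'', ph1', ph2', a''; repeat split; lra || assumption.
Qed.
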